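(* Let $R$ be a ring with prime subring $P$ (the subring generated by $1$). Let $M$ be a submonoid of the unit group $U(R)$ and let $C$ be a subring of $R$. Suppose that: (1) the subring generated by $P$ and $M$ is the monoid ring $P[M]$ (i.e. the natural map $P[M]\to R$ is injective); (2) for each $c\in C$ and $f\in P[M]$, $cf=0$ implies $c=0$ or $f=0$; (3) every element of $M$ commutes with every element of $C$; (4) $M$ is an orderable monoid, i.e. it admits a total order $<$ such that $x<y$ implies $zx<zy$ and $xz<yz$ for all $x,y,z\in M$; (5) $M$ embeds in some group $H$ such that the subgroup of $H$ generated by $M$ has trivial center. Then the subring of $R$ generated by $C$ and $M$ is the monoid ring $C[M]$ (i.e. the natural map $C[M]\to R$ is injective). *)

From HB Require Import structures.
From mathcomp Require Import all_boot all_order all_algebra.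
Set Implicit Arguments. Unset Strict Implicit. Unset Printing Implicit Defensive.
Import GRing.Theory.
Local Open Scope ring_scope.

Definition is_unit (R : pzRingType) (x : R) : Prop :=
  exists y : R, x * y = 1 /\ y * x = 1.

Definition submonoid_of_units (R : pzRingType) (M : pred R) : Prop :=
  [/\ 1 \in M, {in M &, forall x y, x * y \in M} & {in M, forall x, is_unit x}].

Definition subring (R : pzRingType) (C : pred R) : Prop :=
  [/\ 1 \in C, {in C &, forall x y, x - y \in C} & {in C &, forall x y, x * y \in C}].

(* f lies in the subring generated by the prime subring P (image of Z) and M,
   i.e. f is an integral linear combination of elements of M. *)
Definition in_PM (R : pzRingType) (M : pred R) (f : R) : Prop :=
  exists n (m : 'I_n -> R) (a : 'I_n -> int),
    (forall i, m i \in M) /\ f = \sum_(i < n) (a i)%:~R * m i.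

(* The natural map P[M] -> R is injective. *)
Definition PM_is_monoid_ring (R : pzRingType) (M : pred R) : Prop :=
  forall n (m : 'I_n -> R) (a : 'I_n -> int),
    injective m -> (forall i, m i \in M) ->
    \sum_(i < n) (a i)%:~R * m i = 0 -> forall i, (a i)%:~R = 0 :> R.

Definition CM_is_monoid_ring (R : pzRingType) (C M : pred R) : Prop :=
  forall n (m : 'I_n -> R) (c : 'I_n -> R),
    injective m -> (forall i, m i \in M) -> (forall i, c i \in C) ->
    \sum_(i < n) c i * m i = 0 -> forall i, c i = 0.

Definition orderable_monoid (R : pzRingType) (M : pred R) : Prop :=
  exists lt : R -> R -> Prop,
    [/\ {in M, forall x, ~ lt x x},
        {in M & &, forall x y z, lt x y -> lt y z -> lt x z},
        {in M &, forall x y, x <> y -> lt x y \/ lt y x} &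
        {in M & &, forall x y z, lt x y -> lt (z * x) (z * y) /\ lt (x * z) (y * z)}].

Record group_str := GroupStr {
  gcar : Type;
  gmul : gcar -> gcar -> gcar;
  gone : gcar;
  ginv : gcar -> gcar;
  gmulA : forall x y z, gmul x (gmul y z) = gmul (gmul x y) z;
  gmul1l : forall x, gmul gone x = x;
  gmul1r : forall x, gmul x gone = x;
  gmulVl : forall x, gmul (ginv x) x = gone;
  gmulVr : forall x, gmul x (ginv x) = gone
}.

Inductive gen_subgroup (G : group_str) (S : gcar G -> Prop) : gcar G -> Prop :=
  | gen_one : gen_subgroup S (gone G)
  | gen_base x : S x -> gen_subgroup S x
  | gen_mul x y : gen_subgroup S x -> gen_subgroup S y -> gen_subgroup S (gmul x y)
  | gen_inv x : gen_subgroup S x -> gen_subgroup S (ginv x).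

Definition trivial_center (G : group_str) (K : gcar G -> Prop) : Prop :=
  forall h, K h -> (forall g, K g -> gmul h g = gmul g h) -> h = gone G.

Definition embeds_trivial_center (R : pzRingType) (M : pred R) : Prop :=
  exists (H : group_str) (phi : R -> gcar H),
    [/\ {in M &, injective phi},
        phi 1 = gone H,
        {in M &, forall x y, phi (x * y) = gmul (phi x) (phi y)} &
        trivial_center (gen_subgroup (fun h => exists2 m, m \in M & h = phi m))].

From HB Require Import structures.
From mathcomp Require Import all_boot all_order all_algebra.
Import GRing.Theory.
Local Open Scope ring_scope.

(* A relation sum_i c_i m_i = 0 is handled as a formal sum, a list of
   (coefficient, monomial) pairs, and kept distinct from its value in R.
   The argument runs as follows.
   - Trivial center: if a, b in M satisfy a u b = b u a for all u in M, then
     a^-1 b is central in the group generated by M, hence a = b.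
   - Leading monomials: the least monomial of a formal product E u f (f with
     integer coefficients) is the product of the least monomials of E and f.
   - Core step: if E is a C-relation and f a nonzero element of P[M] such that
     E u f and f u E have the same coefficients for every u in M, then the
     least monomials of E and f agree by the previous two facts, and
     cancelling them, f_a E - E_a f, yields a contradiction unless E = 0.
   - Induction: writing the coefficients of E as a C-combination of n
     elements f_k of P[M], the commutators E u f_1 - f_1 u E are C-relations
     whose coefficients are C-combinations of n - 1 elements of P[M]; so they
     vanish by induction and the core step applies.
   The theorem is the case where f_k is the single monomial m_k. *)

Set Implicit Arguments.
Unset Strict Implicit.
Unset Printing Implicit Defensive.

Lemma sum_if_eq (R : pzRingType) (U : seq R) (a : R) (F : R -> R) :
  uniq U -> a \in U -> \sum_(x <- U) (if a == x then F x else 0) = F a.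
Proof.
move=> uU aU; rewrite (bigD1_seq a) //= eqxx big1 ?addr0 // => x /negbTE.
by rewrite eq_sym => ->.
Qed.

Lemma sum_neq0 (R : pzRingType) (T : eqType) (s : seq T) (F : T -> R) :
  \sum_(x <- s) F x != 0 -> exists2 x, x \in s & F x != 0.
Proof.
elim: s => [|x s IH]; first by rewrite big_nil eqxx.
rewrite big_cons; have [Fx|Fx] := eqVneq (F x) 0.
  by rewrite Fx add0r => /IH [y ys Fy]; exists y => //; rewrite inE ys orbT.
by move=> _; exists x; rewrite ?inE ?eqxx.
Qed.

Section FormalSums.

Variable R : pzRingType.

(* A formal sum is a list of pairs (coefficient, monomial). *)
Local Notation fsum := (seq (R * R)).

Definition fs_coef (A : fsum) (w : R) : R := \sum_(p <- A | p.2 == w) p.1.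

Definition fs_eval (A : fsum) : R := \sum_(p <- A) p.1 * p.2.

Definition fs_twist (A : fsum) (u : R) (B : fsum) : fsum :=
  [seq (p.1 * q.1, p.2 * u * q.2) | p <- A, q <- B].

Definition fs_scale (c : R) (A : fsum) : fsum := [seq (c * p.1, p.2) | p <- A].

Definition formally_zero (A : fsum) : Prop := forall w, fs_coef A w = 0.

Definition cover (As : seq fsum) : seq R := undup (flatten [seq map snd A | A <- As]).

Lemma cover_uniq As : uniq (cover As).
Proof. exact: undup_uniq. Qed.

Lemma cover_sub As A : A \in As -> {subset map snd A <= cover As}.
Proof.
move=> AAs x xA; rewrite mem_undup; apply/flattenP.
by exists (map snd A) => //; apply: map_f.
Qed.

Lemma cover_pair A B :
  {subset map snd A <= cover [:: A; B]} /\ {subset map snd B <= cover [:: A; B]}.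
Proof. by split; apply: cover_sub; rewrite !inE eqxx ?orbT. Qed.

Lemma fs_coef_nil w : fs_coef [::] w = 0.
Proof. by rewrite /fs_coef big_nil. Qed.

Lemma fs_coef_cons p A w :
  fs_coef (p :: A) w = (if p.2 == w then p.1 else 0) + fs_coef A w.
Proof. by rewrite /fs_coef big_cons; case: ifP; rewrite ?add0r. Qed.

Lemma fs_coef_cat A B w : fs_coef (A ++ B) w = fs_coef A w + fs_coef B w.
Proof. by rewrite /fs_coef big_cat. Qed.

Lemma fs_coef_scale c A w : fs_coef (fs_scale c A) w = c * fs_coef A w.
Proof. by rewrite /fs_coef /fs_scale big_map mulr_sumr. Qed.

Lemma fs_coef_notin A w : w \notin map snd A -> fs_coef A w = 0.
Proof.
elim: A => [|p A IH] /=; first by rewrite fs_coef_nil.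
rewrite inE negb_or => /andP[ne nin]; rewrite fs_coef_cons IH // addr0.
by rewrite eq_sym (negbTE ne).
Qed.

Lemma fs_coef_support A w : fs_coef A w != 0 -> w \in map snd A.
Proof. by apply: contraR => /fs_coef_notin ->. Qed.

Lemma sum_by_coef A (U : seq R) (h : R -> R) :
  uniq U -> {subset map snd A <= U} ->
  \sum_(p <- A) p.1 * h p.2 = \sum_(x <- U) fs_coef A x * h x.
Proof.
move=> uU; elim: A => [|p A IH] sub.
  by rewrite big_nil big1 // => x _; rewrite fs_coef_nil mul0r.
rewrite big_cons IH; last by move=> x xA; apply: sub; rewrite inE xA orbT.
rewrite -[in LHS](@sum_if_eq _ U p.2 (fun x => p.1 * h x) uU); last first.
  by apply: sub; rewrite inE eqxx.
rewrite -big_split /=; apply: eq_bigr => x _.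
by rewrite fs_coef_cons mulrDl; case: ifP; rewrite ?mul0r.
Qed.

Lemma fs_eval_coef A (U : seq R) :
  uniq U -> {subset map snd A <= U} -> fs_eval A = \sum_(x <- U) fs_coef A x * x.
Proof. exact: (@sum_by_coef A U id). Qed.

Lemma fs_coef_twist A B u w (U : seq R) :
  uniq U -> {subset map snd A <= U} -> {subset map snd B <= U} ->
  fs_coef (fs_twist A u B) w =
  \sum_(x <- U) fs_coef A x * \sum_(y <- U) fs_coef B y * (x * u * y == w)%:R.
Proof.
move=> uU sA sB; rewrite /fs_coef /fs_twist big_mkcond big_allpairs_dep /=.
transitivity (\sum_(p <- A) p.1 * \sum_(q <- B) q.1 * (p.2 * u * q.2 == w)%:R).
  apply: eq_bigr => p _; rewrite mulr_sumr; apply: eq_bigr => q _.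
  by case: eqP; rewrite ?mulr1 ?mulr0 ?mulrA.
rewrite (@sum_by_coef A U (fun x => \sum_(q <- B) q.1 * (x * u * q.2 == w)%:R)) //.
apply: eq_bigr => x _; congr (_ * _).
exact: (@sum_by_coef B U (fun y => (x * u * y == w)%:R)).
Qed.

Lemma fs_eval_cat A B : fs_eval (A ++ B) = fs_eval A + fs_eval B.
Proof. by rewrite /fs_eval big_cat. Qed.

Lemma fs_eval_scale c A : fs_eval (fs_scale c A) = c * fs_eval A.
Proof.
rewrite /fs_eval /fs_scale big_map mulr_sumr.
by apply: eq_bigr => p _; rewrite mulrA.
Qed.

Lemma fs_eval_twist A B u :
  (forall p q, p \in A -> q \in B -> q.1 * (p.2 * u) = p.2 * u * q.1) ->
  fs_eval (fs_twist A u B) = fs_eval A * u * fs_eval B.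
Proof.
move=> h; rewrite /fs_eval /fs_twist big_allpairs_dep /= mulr_suml mulr_suml.
apply: eq_big_seq => p pA; rewrite mulr_sumr; apply: eq_big_seq => q qB /=.
transitivity (p.1 * ((q.1 * (p.2 * u)) * q.2)); first by rewrite !mulrA.
by rewrite h // !mulrA.
Qed.

Lemma formally_zero_dec A : {formally_zero A} + {~ formally_zero A}.
Proof.
have [allz|] := boolP (all (fun x => fs_coef A x == 0) (map snd A)).
  left=> w; have [//|/fs_coef_support wA] := eqVneq (fs_coef A w) 0.
  exact/eqP/(allP allz).
by move=> notz; right=> Az; case/negP: notz; apply/allP => x _; apply/eqP.
Qed.

Definition coef_combination (A : fsum) (D : seq (R * fsum)) : Prop :=
  forall x, fs_coef A x = \sum_(d <- D) d.1 * fs_coef d.2 x.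

Lemma combination_twistl A B u D : coef_combination A D ->
  coef_combination (fs_twist A u B) [seq (d.1, fs_twist d.2 u B) | d <- D].
Proof.
move=> hA w; rewrite big_map /=.
set U := cover (A :: B :: map snd D).
have sA : {subset map snd A <= U} by apply: cover_sub; rewrite mem_head.
have sB : {subset map snd B <= U} by apply: cover_sub; rewrite !inE eqxx orbT.
have sD d : d \in D -> {subset map snd d.2 <= U}.
  by move=> dD; apply: cover_sub; rewrite !inE map_f ?orbT.
rewrite (fs_coef_twist _ _ (cover_uniq _) sA sB).
transitivity (\sum_(x <- U) \sum_(d <- D) d.1 * (fs_coef d.2 x *
                \sum_(y <- U) fs_coef B y * (x * u * y == w)%:R)).
  by apply: eq_bigr => x _; rewrite hA mulr_suml; apply: eq_bigr => d _; rewrite mulrA.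
rewrite exchange_big; apply: eq_big_seq => d dD /=.
rewrite (fs_coef_twist _ _ (cover_uniq _) (sD d dD) sB).
by rewrite mulr_sumr.
Qed.

Lemma combination_twistr A B u D : coef_combination B D ->
  (forall x d, d \in D -> fs_coef A x * d.1 = d.1 * fs_coef A x) ->
  coef_combination (fs_twist A u B) [seq (d.1, fs_twist A u d.2) | d <- D].
Proof.
move=> hB hcomm w; rewrite big_map /=.
set U := cover (A :: B :: map snd D).
have sA : {subset map snd A <= U} by apply: cover_sub; rewrite mem_head.
have sB : {subset map snd B <= U} by apply: cover_sub; rewrite !inE eqxx orbT.
have sD d : d \in D -> {subset map snd d.2 <= U}.
  by move=> dD; apply: cover_sub; rewrite !inE map_f ?orbT.
rewrite (fs_coef_twist _ _ (cover_uniq _) sA sB).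
transitivity (\sum_(d <- D) \sum_(x <- U) d.1 * (fs_coef A x *
                \sum_(y <- U) fs_coef d.2 y * (x * u * y == w)%:R)).
  rewrite exchange_big; apply: eq_bigr => x _.
  transitivity (fs_coef A x * \sum_(d <- D) d.1 *
                  \sum_(y <- U) fs_coef d.2 y * (x * u * y == w)%:R).
    congr (_ * _).
    transitivity (\sum_(y <- U) \sum_(d <- D) d.1 * (fs_coef d.2 y * (x * u * y == w)%:R)).
      by apply: eq_bigr => y _; rewrite hB mulr_suml; apply: eq_bigr => d _; rewrite mulrA.
    by rewrite exchange_big; apply: eq_bigr => d _; rewrite mulr_sumr.
  by rewrite mulr_sumr; apply: eq_big_seq => d dD; rewrite !mulrA hcomm.
apply: eq_big_seq => d dD /=.
rewrite (fs_coef_twist _ _ (cover_uniq _) sA (sD d dD)).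
by rewrite mulr_sumr.
Qed.

Lemma fs_coef_twist_single A B u a b :
  fs_coef A a != 0 -> fs_coef B b != 0 ->
  (forall x y, fs_coef A x != 0 -> fs_coef B y != 0 ->
     x * u * y = a * u * b -> x = a /\ y = b) ->
  fs_coef (fs_twist A u B) (a * u * b) = fs_coef A a * fs_coef B b.
Proof.
move=> ca cb only_ab; have [sA sB] := cover_pair A B; set U := cover _ in sA sB *.
rewrite (fs_coef_twist _ _ (cover_uniq _) sA sB).
rewrite -(@sum_if_eq _ U a (fun=> fs_coef A a * fs_coef B b) (cover_uniq _));
  last exact/sA/fs_coef_support.
apply: eq_bigr => x _; have [<-|nax] := eqVneq a x.
  rewrite -(@sum_if_eq _ U b (fs_coef B) (cover_uniq _)); last exact/sB/fs_coef_support.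
  congr (_ * _); apply: eq_bigr => y _; have [<-|nby] := eqVneq b y.
    by rewrite eqxx mulr1.
  have [->|cy] := eqVneq (fs_coef B y) 0; first by rewrite mul0r.
  by case: eqP => [/(only_ab _ _ ca cy) [_ eyb]|_]; rewrite ?eyb ?eqxx ?mulr0 in nby *.
have [->|cx] := eqVneq (fs_coef A x) 0; first by rewrite mul0r.
rewrite big1 ?mulr0 // => y _; have [->|cy] := eqVneq (fs_coef B y) 0; first by rewrite mul0r.
by case: eqP => [/(only_ab _ _ cx cy) [exa _]|_]; rewrite ?exa ?eqxx ?mulr0 in nax *.
Qed.

Lemma fs_twist_support A B u w : fs_coef (fs_twist A u B) w != 0 ->
  exists x y, [/\ fs_coef A x != 0, fs_coef B y != 0 & w = x * u * y].
Proof.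
have [sA sB] := cover_pair A B; set U := cover _ in sA sB *.
rewrite (fs_coef_twist _ _ (cover_uniq _) sA sB) => /sum_neq0 [x _].
have [->|cx] := eqVneq (fs_coef A x) 0; first by rewrite mul0r eqxx.
move=> prod_nz; have /sum_neq0 [y _] : \sum_(y <- U) fs_coef B y * (x * u * y == w)%:R != 0.
  by apply: contraNneq prod_nz => ->; rewrite mulr0.
have [->|cy] := eqVneq (fs_coef B y) 0; first by rewrite mul0r eqxx.
by have [<- _|] := eqVneq (x * u * y) w; [exists x, y | rewrite mulr0 eqxx].
Qed.

Definition fs_commutator (A : fsum) (u : R) (B : fsum) : fsum :=
  fs_twist A u B ++ fs_scale (-1) (fs_twist B u A).

Lemma fs_coef_commutator A u B w :
  fs_coef (fs_commutator A u B) w = fs_coef (fs_twist A u B) w - fs_coef (fs_twist B u A) w.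
Proof. by rewrite fs_coef_cat fs_coef_scale mulN1r. Qed.

(* If the coefficients of E are a combination of f and of the members of D,
   the coefficients of the commutator E u f are the same combination of the
   commutators d u f: the contribution of f itself cancels. *)
Lemma combination_commutator E f c D u :
  coef_combination E ((c, f) :: D) ->
  (forall x d, d \in (c, f) :: D -> fs_coef f x * d.1 = d.1 * fs_coef f x) ->
  coef_combination (fs_commutator E u f) [seq (d.1, fs_commutator d.2 u f) | d <- D].
Proof.
move=> combE fcomm w; rewrite fs_coef_commutator.
rewrite (combination_twistl _ _ combE) (combination_twistr _ combE fcomm).
rewrite !big_map !big_cons /= opprD addrACA subrr add0r -sumrB.
by apply: eq_bigr => d _; rewrite fs_coef_commutator mulrBr.
Qed.

End FormalSums.

Section TrivialCenter.

Variable H : group_str.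

Lemma gmul_cancel_l (x y z : gcar H) : gmul x y = gmul x z -> y = z.
Proof. by move=> e; rewrite -(gmul1l y) -(gmul1l z) -(gmulVl x) -!gmulA e. Qed.

Lemma gmul_cancel_r (x y z : gcar H) : gmul y x = gmul z x -> y = z.
Proof. by move=> e; rewrite -(gmul1r y) -(gmul1r z) -(gmulVr x) !gmulA e. Qed.

Lemma gcommV (g x : gcar H) : gmul g x = gmul x g -> gmul g (ginv x) = gmul (ginv x) g.
Proof.
move=> e; apply: (@gmul_cancel_l x); rewrite gmulA -e -gmulA gmulVr gmul1r.
by rewrite gmulA gmulVr gmul1l.
Qed.

(* In a generating set S of a centerless group, with 1 in S, the twisted
   commutation a s b = b s a for all s in S forces a = b: the element a^-1 b
   then commutes with every element of S. *)
Lemma twisted_commute_eq (S : gcar H -> Prop) (a b : gcar H) :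
  trivial_center (gen_subgroup S) -> S (gone H) -> S a -> S b ->
  (forall s, S s -> gmul (gmul a s) b = gmul (gmul b s) a) -> a = b.
Proof.
move=> centerless S1 Sa Sb twisted.
have ab_comm : gmul a b = gmul b a by have := twisted _ S1; rewrite !gmul1r.
set g := gmul (ginv a) b.
have g_sym : g = gmul b (ginv a).
  apply: (@gmul_cancel_l a); apply: (@gmul_cancel_r a).
  by rewrite /g gmulA gmulVr gmul1l -!gmulA gmulVl gmul1r.
have g_comm_S s : S s -> gmul g s = gmul s g.
  move=> Ss; apply: (@gmul_cancel_l a); apply: (@gmul_cancel_r a).
  rewrite {1}/g g_sym !gmulA gmulVr gmul1l -(gmulA _ (ginv a) a) gmulVl gmul1r.
  by rewrite twisted.
have g_central h : gen_subgroup S h -> gmul g h = gmul h g.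
  elim=> [|x /g_comm_S //|x y _ ex _ ey|x _ /gcommV //].
    by rewrite gmul1l gmul1r.
  by rewrite gmulA ex -gmulA ey gmulA.
have g1 : g = gone H.
  by apply: centerless g_central; apply: gen_mul; [apply: gen_inv|]; apply: gen_base.
by rewrite -(gmul1l b) -(gmulVr a) -gmulA -/g g1 gmul1r.
Qed.

End TrivialCenter.

Lemma monoid_twisted_commute_eq (R : pzRingType) (M : pred R) :
  1 \in M -> {in M &, forall x y, x * y \in M} -> embeds_trivial_center M ->
  forall a b, a \in M -> b \in M ->
  (forall u, u \in M -> a * u * b = b * u * a) -> a = b.
Proof.
move=> M1 mulM [H [phi [phi_inj phi1 phiM centerless]]] a b aM bM twisted.
apply: phi_inj => //.
apply: (twisted_commute_eq centerless); [by exists 1 | by exists a | by exists b |].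
by move=> _ [u uM ->]; rewrite -!phiM ?mulM // twisted.
Qed.

Definition monoid_order (R : pzRingType) (M : pred R) (lt : R -> R -> Prop) : Prop :=
  [/\ {in M, forall x, ~ lt x x},
      {in M & &, forall x y z, lt x y -> lt y z -> lt x z},
      {in M &, forall x y, x <> y -> lt x y \/ lt y x} &
      {in M & &, forall x y z, lt x y -> lt (z * x) (z * y) /\ lt (x * z) (y * z)}].

Definition monomials_in (R : pzRingType) (M : pred R) (A : seq (R * R)) : Prop :=
  forall p, p \in A -> p.2 \in M.

Section LeadingMonomials.

Variables (R : pzRingType) (M : pred R) (lt : R -> R -> Prop).
Hypothesis lt_order : monoid_order M lt.
Hypothesis mulM : {in M &, forall x y, x * y \in M}.

Definition lead_mono (A : seq (R * R)) (a : R) : Prop :=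
  [/\ a \in M, fs_coef A a != 0 & forall x, fs_coef A x != 0 -> x = a \/ lt a x].

Lemma monomials_in_coef A x : monomials_in M A -> fs_coef A x != 0 -> x \in M.
Proof. by move=> AM /fs_coef_support /mapP [p pA ->]; apply: AM. Qed.

Lemma lead_mono_ext A B a :
  (forall w, fs_coef A w = fs_coef B w) -> lead_mono B a -> lead_mono A a.
Proof.
by move=> AB [aM ca least_a]; split; rewrite ?AB // => x; rewrite AB; apply: least_a.
Qed.

Lemma lead_mono_unique A a b : lead_mono A a -> lead_mono A b -> a = b.
Proof.
case: lt_order => irr trans _ _ [aM ca least_a] [bM cb least_b].
case: (least_a b cb) => [->//|lt_ab]; case: (least_b a ca) => [->//|lt_ba].
by case: (irr a aM); apply: (trans a b a).
Qed.

Lemma seq_least (s : seq R) : {subset s <= M} -> s != [::] ->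
  exists2 a, a \in s & forall x, x \in s -> x = a \/ lt a x.
Proof.
case: lt_order => _ trans total _; elim: s => [|x s IH] // sM _.
have xM : x \in M by apply: sM; rewrite mem_head.
have [->|s_nil] := eqVneq s [::].
  by exists x; rewrite ?mem_head // => y; rewrite inE => /eqP ->; left.
have sM' : {subset s <= M} by move=> y ys; apply: sM; rewrite inE ys orbT.
have [a aS least_a] := IH sM' s_nil.
have aM : a \in M by apply: sM'.
have [->|xa] := eqVneq x a.
  by exists a; rewrite ?mem_head // => y; rewrite inE => /orP [/eqP ->|/least_a]; [left|].
case: (total x a xM aM (elimN eqP xa)) => [lt_xa|lt_ax].
  exists x; first by rewrite mem_head.
  move=> y; rewrite inE => /orP [/eqP ->|ys]; first by left.
  case: (least_a y ys) => [->|lt_ay]; right => //.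
  by apply: (trans x a y) => //; apply: sM'.
exists a; first by rewrite inE aS orbT.
by move=> y; rewrite inE => /orP [/eqP ->|/least_a]; [right|].
Qed.

Lemma lead_mono_exists A : monomials_in M A -> ~ formally_zero A -> exists a, lead_mono A a.
Proof.
move=> AM nzA; set S := [seq x <- undup (map snd A) | fs_coef A x != 0].
have SM : {subset S <= M}.
  by move=> x; rewrite mem_filter => /andP [cx _]; apply: monomials_in_coef cx.
have S_nil : S != [::].
  apply: contra_notN nzA => /eqP S0 w; apply/eqP/negPn/negP => cw.
  have : w \in S by rewrite mem_filter cw mem_undup fs_coef_support.
  by rewrite S0.
have [a aS least_a] := seq_least SM S_nil.
move: (aS); rewrite mem_filter => /andP [ca _].
exists a; split => //; first exact: SM.
by move=> x cx; apply: least_a; rewrite mem_filter cx mem_undup fs_coef_support.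
Qed.

Lemma lt_mul3 a b u x y : a \in M -> b \in M -> u \in M -> x \in M -> y \in M ->
  x = a \/ lt a x -> y = b \/ lt b y -> (x = a /\ y = b) \/ lt (a * u * b) (x * u * y).
Proof.
case: lt_order => _ trans _ mono aM bM uM xM yM hx hy.
have auM : a * u \in M by apply: mulM.
have xuM : x * u \in M by apply: mulM.
have lt_left y' : y' \in M -> lt a x -> lt (a * u * y') (x * u * y').
  by move=> y'M lt_ax; have [_ /(mono _ _ y' auM xuM y'M) []] := mono a x u aM xM uM lt_ax.
have lt_right : lt b y -> lt (a * u * b) (a * u * y).
  by move=> lt_by; case: (mono b y (a * u) bM yM auM lt_by).
case: hx => [->|lt_ax]; case: hy => [->|lt_by]; first by left.
- by right; apply: lt_right.
- by right; apply: lt_left.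
- right; apply: (trans _ (a * u * y)); rewrite ?mulM //.
  + exact: lt_right.
  + exact: lt_left.
Qed.

Lemma lead_mono_twist A B a b u :
  monomials_in M A -> monomials_in M B -> u \in M ->
  lead_mono A a -> lead_mono B b -> fs_coef A a * fs_coef B b != 0 ->
  lead_mono (fs_twist A u B) (a * u * b).
Proof.
move=> AM BM uM [aM ca least_a] [bM cb least_b] cab.
have above x y : fs_coef A x != 0 -> fs_coef B y != 0 ->
    (x = a /\ y = b) \/ lt (a * u * b) (x * u * y).
  move=> cx cy; apply: lt_mul3 => //.
  - exact: monomials_in_coef AM cx.
  - exact: monomials_in_coef BM cy.
  - exact: least_a.
  - exact: least_b.
have aubM : a * u * b \in M by rewrite !mulM.
split => //.
  rewrite fs_coef_twist_single // => x y cx cy e.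
  case: (above x y cx cy) => // lt_aub; case: lt_order => irr _ _ _.
  by case: (irr _ aubM); rewrite e in lt_aub.
move=> w /fs_twist_support [x [y [cx cy ->]]].
by case: (above x y cx cy) => [[-> ->]|]; [left|right].
Qed.

End LeadingMonomials.

Section MonoidRing.

Variables (R : pzRingType) (M C : pred R).
Hypothesis M1 : 1 \in M.
Hypothesis mulM : {in M &, forall x y, x * y \in M}.
Hypothesis C_subring : subring C.
Hypothesis PM_free : PM_is_monoid_ring M.
Hypothesis C_PM_domain :
  forall c f, c \in C -> in_PM M f -> c * f = 0 -> c = 0 \/ f = 0.
Hypothesis MC_comm : {in M & C, forall m c, m * c = c * m}.
Hypothesis M_centerless : embeds_trivial_center M.
Variable lt : R -> R -> Prop.
Hypothesis lt_order : monoid_order M lt.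

Definition PM_fsum (f : seq (R * R)) : Prop :=
  monomials_in M f /\ forall p, p \in f -> exists z : int, p.1 = z%:~R.

Definition C_fsum (A : seq (R * R)) : Prop :=
  forall p, p \in A -> p.1 \in C /\ p.2 \in M.

Lemma C_0 : 0 \in C.
Proof. by have [C0 _] := GRing.zmod_closedD (GRing.subring_closedB C_subring). Qed.

Lemma C_add x y : x \in C -> y \in C -> x + y \in C.
Proof. by have [_ C_D] := GRing.zmod_closedD (GRing.subring_closedB C_subring); apply: C_D. Qed.

Lemma C_opp x : x \in C -> - x \in C.
Proof. by move=> xC; apply: (GRing.zmod_closedN (GRing.subring_closedB C_subring)). Qed.

Lemma C_mul x y : x \in C -> y \in C -> x * y \in C.
Proof. by case: C_subring => _ _ C_M; apply: C_M. Qed.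

Lemma C_int (z : int) : z%:~R \in C.
Proof.
have C_nat n : n%:R \in C.
  by elim: n => [|n IH]; rewrite ?C_0 // mulrS C_add //; case: C_subring.
by case: z => n; [exact: (C_nat n) | rewrite NegzE intrN C_opp //; exact: (C_nat n.+1)].
Qed.

Lemma mulM3 x u y : x \in M -> u \in M -> y \in M -> x * u * y \in M.
Proof. by move=> xM uM yM; apply: mulM => //; apply: mulM. Qed.

Lemma PM_fsum_coef f w : PM_fsum f -> exists z : int, fs_coef f w = z%:~R.
Proof.
case=> _; rewrite /fs_coef; elim: f => [|p f IH] fZ; first by exists 0; rewrite big_nil.
have [z fz] := IH (fun q qf => fZ q (@mem_behead _ (p :: f) q qf)).
have [z0 pz] := fZ p (mem_head _ _).
rewrite big_cons; case: ifP => _; last by exists z.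
by exists (z0 + z); rewrite intrD -pz -fz.
Qed.

Lemma PM_fsum_coef_comm f w x : PM_fsum f -> fs_coef f w * x = x * fs_coef f w.
Proof. by case/(PM_fsum_coef w) => z ->; rewrite commr_int. Qed.

Lemma PM_fsum_twist f g u : u \in M -> PM_fsum f -> PM_fsum g -> PM_fsum (fs_twist f u g).
Proof.
move=> uM [fM fZ] [gM gZ]; split=> _ /allpairsP [[p q] /= [pf qg ->]] /=.
  by rewrite mulM3 ?(fM p) ?(gM q).
by have [z1 ->] := fZ p pf; have [z2 ->] := gZ q qg; exists (z1 * z2); rewrite intrM.
Qed.

Lemma PM_fsum_commutator f g u :
  u \in M -> PM_fsum f -> PM_fsum g -> PM_fsum (fs_commutator f u g).
Proof.
move=> uM Pf Pg; have [fgM fgZ] := PM_fsum_twist uM Pf Pg.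
have [gfM gfZ] := PM_fsum_twist uM Pg Pf.
split=> p; rewrite mem_cat => /orP [pfg|/mapP [q qgf ->]] /=.
- exact: fgM.
- exact: gfM.
- exact: fgZ.
- by have [z ->] := gfZ q qgf; exists (- z); rewrite intrN mulN1r.
Qed.

Lemma C_fsum_monomials A : C_fsum A -> monomials_in M A.
Proof. by move=> CA p /CA []. Qed.

Lemma C_fsum_coef A w : C_fsum A -> fs_coef A w \in C.
Proof.
move=> CA; rewrite /fs_coef big_mkcond /=.
elim: A CA => [|p A IH] CA; first by rewrite big_nil C_0.
rewrite big_cons C_add ?IH // => [|q qA]; last exact/CA/(@mem_behead _ (p :: A)).
by case: ifP => _; [case: (CA p (mem_head _ _)) | rewrite C_0].
Qed.

Lemma PM_C_fsum f : PM_fsum f -> C_fsum f.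
Proof. by case=> fM fZ p pf; have [z ->] := fZ p pf; rewrite C_int fM. Qed.

Lemma C_fsum_cat A B : C_fsum A -> C_fsum B -> C_fsum (A ++ B).
Proof. by move=> CA CB p; rewrite mem_cat => /orP []; [apply: CA | apply: CB]. Qed.

Lemma C_fsum_scale c A : c \in C -> C_fsum A -> C_fsum (fs_scale c A).
Proof. by move=> cC CA _ /mapP [p /CA [p1 p2] ->]; rewrite C_mul. Qed.

Lemma C_fsum_commutator A f u :
  u \in M -> C_fsum A -> PM_fsum f -> C_fsum (fs_commutator A u f).
Proof.
move=> uM CA /PM_C_fsum Cf; apply: C_fsum_cat; last apply: C_fsum_scale.
- by move=> _ /allpairsP [[p q] /= [/CA [p1 p2] /Cf [q1 q2] ->]]; rewrite C_mul ?mulM3.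
- by rewrite C_opp //; case: C_subring.
- by move=> _ /allpairsP [[p q] /= [/Cf [p1 p2] /CA [q1 q2] ->]]; rewrite C_mul ?mulM3.
Qed.

Lemma fs_eval_commutator A f u : u \in M -> C_fsum A -> PM_fsum f ->
  fs_eval (fs_commutator A u f) = fs_eval A * u * fs_eval f - fs_eval f * u * fs_eval A.
Proof.
move=> uM CA [fM fZ]; rewrite fs_eval_cat fs_eval_scale mulN1r.
rewrite fs_eval_twist => [|p q _ /fZ [z ->]]; last by rewrite commr_int.
rewrite fs_eval_twist // => p q /fM pM /CA [qC _].
by rewrite [RHS]MC_comm ?mulM.
Qed.

Lemma in_PM_eval f : PM_fsum f -> in_PM M (fs_eval f).
Proof.
case=> fM fZ.
have /fin_all_exists [a fa] : forall i : 'I_(size f), exists z : int,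
    (nth (0, 1) f i).1 = z%:~R by move=> i; apply/fZ/mem_nth.
exists (size f), (fun i => (nth (0, 1) f i).2), a; split.
  by move=> i; apply/fM/mem_nth.
by rewrite /fs_eval (big_nth (0, 1)) big_mkord; apply: eq_bigr => i _; rewrite fa.
Qed.

Lemma PM_fsum_eval0 f : PM_fsum f -> fs_eval f = 0 -> formally_zero f.
Proof.
move=> Pf f0; set U := undup (map snd f).
have uU : uniq U by apply: undup_uniq.
have /fin_all_exists [a fa] : forall i : 'I_(size U), exists z : int,
    fs_coef f (nth 1 U i) = z%:~R by move=> i; apply: PM_fsum_coef.
have U_inj : injective (fun i : 'I_(size U) => nth 1 U i).
  by move=> i j /eqP; rewrite nth_uniq // => /eqP/val_inj.
have UM (i : 'I_(size U)) : nth 1 U i \in M.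
  have /mapP [p pf ->] : nth 1 U i \in map snd f by rewrite -mem_undup mem_nth.
  by case: Pf => fM _; apply: fM.
have sum0 : \sum_(i < size U) (a i)%:~R * nth 1 U i = 0.
  rewrite -[RHS]f0 (fs_eval_coef uU) => [|x]; last by rewrite mem_undup.
  by rewrite [RHS](big_nth 1) big_mkord; apply: eq_bigr => i _; rewrite fa.
have a0 := PM_free U_inj UM sum0.
move=> w; have [wU|wU] := boolP (w \in U); last by rewrite fs_coef_notin // -mem_undup.
have wi : (index w U < size U)%N by rewrite index_mem.
by rewrite -(nth_index 1 wU) -[index w U]/(nat_of_ord (Ordinal wi)) fa a0.
Qed.

Lemma in_PM_coef f w : PM_fsum f -> in_PM M (fs_coef f w).
Proof.
case/(PM_fsum_coef w) => z ->; exists 1%N, (fun=> 1), (fun=> z).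
by split=> //; rewrite big_ord1 mulr1.
Qed.

Lemma lead_monos_agree E f a b :
  C_fsum E -> PM_fsum f ->
  (forall u, u \in M -> formally_zero (fs_commutator E u f)) ->
  lead_mono M lt E a -> lead_mono M lt f b -> a = b.
Proof.
move=> CE Pf comm_Ef leadE leadf; have [[aM ca _] [bM cb _]] := (leadE, leadf).
have EM := C_fsum_monomials CE; have [fM _] := Pf.
have cab : fs_coef E a * fs_coef f b != 0.
  apply/negP => /eqP /(C_PM_domain (C_fsum_coef a CE) (in_PM_coef b Pf)).
  by case=> /eqP; rewrite ?(negbTE ca) ?(negbTE cb).
have cba : fs_coef f b * fs_coef E a != 0 by rewrite PM_fsum_coef_comm.
apply: (monoid_twisted_commute_eq M1 mulM M_centerless aM bM) => u uM.
have lead_Euf := lead_mono_twist lt_order mulM EM fM uM leadE leadf cab.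
have lead_fuE := lead_mono_twist lt_order mulM fM EM uM leadf leadE cba.
apply: (lead_mono_unique lt_order lead_Euf); apply: lead_mono_ext lead_fuE => w.
by apply/eqP; rewrite -subr_eq0 -fs_coef_commutator comm_Ef.
Qed.

(* Otherwise E and f share their least monomial a, and
   E' = f_a E - E_a f loses it; E' = 0 would give E_a f = 0 in R, and E' != 0
   would have least monomial a again. *)
Lemma relation_vanishes_core E f :
  C_fsum E -> fs_eval E = 0 -> PM_fsum f -> ~ formally_zero f ->
  (forall u, u \in M -> formally_zero (fs_commutator E u f)) -> formally_zero E.
Proof.
move=> CE E0 Pf nzf comm_Ef; have [//|nzE] := formally_zero_dec E.
have [a leadE] := lead_mono_exists lt_order (C_fsum_monomials CE) nzE.
have [b leadf] := lead_mono_exists lt_order (proj1 Pf) nzf.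
have eab := lead_monos_agree CE Pf comm_Ef leadE leadf; subst b.
have [_ ca _] := leadE.
pose E' := fs_scale (fs_coef f a) E ++ fs_scale (- fs_coef E a) f.
have combE' : coef_combination E' [:: (- fs_coef E a, f); (fs_coef f a, E)].
  by move=> x; rewrite fs_coef_cat !fs_coef_scale !big_cons big_nil addr0 addrC.
have E'a : fs_coef E' a = 0.
  by rewrite combE' !big_cons big_nil addr0 /= mulNr (PM_fsum_coef_comm a _ Pf) addNr.
have CE' : C_fsum E'.
  apply: C_fsum_cat; apply: C_fsum_scale; rewrite ?C_opp ?C_fsum_coef //.
    exact: PM_C_fsum.
  exact: PM_C_fsum.
have [E'0|nzE'] := formally_zero_dec E'.
  have : fs_coef E a * fs_eval f = 0.
    have := fs_eval_coef (cover_uniq [:: E']) (cover_sub (mem_head _ _)).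
    rewrite big1 => [|x _]; last by rewrite E'0 mul0r.
    rewrite fs_eval_cat !fs_eval_scale E0 mulr0 add0r mulNr => /eqP.
    by rewrite oppr_eq0 => /eqP.
  case/(C_PM_domain (C_fsum_coef a CE) (in_PM_eval Pf)) => [/eqP|/(PM_fsum_eval0 Pf)//].
  by rewrite (negbTE ca).
have comm_E'f u : u \in M -> formally_zero (fs_commutator E' u f).
  move=> uM w; rewrite (combination_commutator _ combE') => [|x d _]; last first.
    exact: PM_fsum_coef_comm.
  by rewrite big_map big_cons big_nil /= comm_Ef // mulr0 addr0.
have [a' leadE'] := lead_mono_exists lt_order (C_fsum_monomials CE') nzE'.
have ea' := lead_monos_agree CE' Pf comm_E'f leadE' leadf.
by case: leadE'; rewrite ea' E'a eqxx.
Qed.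

(* Induction on the number of elements of P[M] whose C-combination gives the
   coefficients of E: the commutators E u f, f the first of them, need one
   fewer, and vanish by induction. *)
Lemma relation_vanishes n E D :
  size D = n -> C_fsum E -> fs_eval E = 0 ->
  (forall d, d \in D -> d.1 \in C /\ PM_fsum d.2) -> coef_combination E D ->
  formally_zero E.
Proof.
elim: n E D => [|n IH] E [|[c f] D] //=.
  by move=> _ _ _ _ combE w; rewrite combE big_nil.
move=> [sizeD] CE E0 DCP combE.
have [cC Pf] := DCP _ (mem_head _ _).
have DCP' d : d \in D -> d.1 \in C /\ PM_fsum d.2.
  by move=> dD; apply/DCP/(@mem_behead _ ((c, f) :: D)).
have [f0|nzf] := formally_zero_dec f.
  by apply: (IH E D) => // x; rewrite combE big_cons /= f0 mulr0 add0r.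
apply: (relation_vanishes_core CE E0 Pf nzf) => u uM.
apply: (IH _ [seq (d.1, fs_commutator d.2 u f) | d <- D]).
- by rewrite size_map.
- exact: C_fsum_commutator.
- by rewrite fs_eval_commutator // E0 !mul0r mulr0 subrr.
- by move=> _ /mapP [d /DCP' [dC Pd] ->]; split; last apply: PM_fsum_commutator.
- by apply: combination_commutator => // x d _; rewrite PM_fsum_coef_comm.
Qed.

End MonoidRing.


Unset Implicit Arguments.

(* A relation sum_i c_i m_i = 0 is the formal sum E = [(c_i, m_i)], whose
   coefficients are the combination of the monomials m_i with coefficients
   c_i; so E is formally zero, i.e. each c_i vanishes. *)
Theorem lemma2p1 (R : pzRingType) (M C : pred R) :
  submonoid_of_units M ->
  subring C ->
  PM_is_monoid_ring M ->
  (forall c f, c \in C -> in_PM M f -> c * f = 0 -> c = 0 \/ f = 0) ->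
  {in M & C, forall m c, m * c = c * m} ->
  orderable_monoid M ->
  embeds_trivial_center M ->
  CM_is_monoid_ring C M.
Proof.
move=> [M1 mulM _] C_subring PM_free C_PM_domain MC_comm [lt lt_order] M_centerless.
move=> n m c m_inj mM cC rel i.
pose E := [seq (c j, m j) | j <- index_enum 'I_n].
pose D := [seq (c j, [:: (1 : R, m j)]) | j <- index_enum 'I_n].
have CE : C_fsum M C E by move=> _ /mapP [j _ ->]; split; [apply: cC | apply: mM].
have E0 : fs_eval E = 0 by rewrite /fs_eval big_map.
have DCP d : d \in D -> d.1 \in C /\ PM_fsum M d.2.
  move=> /mapP [j _ ->]; split; first exact: cC.
  by split=> p; rewrite inE => /eqP ->; [apply: mM | exists 1].
have combE : coef_combination E D.
  move=> x; rewrite /fs_coef !big_map big_mkcond; apply: eq_bigr => j _ /=.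
  by rewrite big_cons big_nil; case: eqP; rewrite ?addr0 ?mulr1 ?mulr0.
have := relation_vanishes M1 mulM C_subring PM_free C_PM_domain MC_comm M_centerless
          lt_order (erefl (size D)) CE E0 DCP combE (m i).
by rewrite /fs_coef big_map (big_pred1 i) // => j; apply: (inj_eq m_inj).
Qed.
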